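(* $\mathsf{ELCR}^-$ is decidable: there is an algorithm which, given a formula $\varphi\in\mathcal{L}^-$, decides whether $\varphi$ is satisfiable in some $k$-sight model (equivalently, whether $\varphi$ is valid on all $k$-sight models).
   Context: Fix a natural number $k$ and a vocabulary: $Pred$ (predicate symbols with arities, containing binary $R$), a nonempty finite set $Cons$ of constants, $Var=\{x,y\}$; terms $\mathsf{Term}=Cons\cup Var$. $\mathcal{L}_{\mathsf{B}}$: $\alpha::=P(t_1,\dots,t_m)\mid t_1\equiv t_2\mid\neg\alpha\mid(\alpha\land\alpha)$. $\mathcal{L}^-$: $\varphi::=\alpha\mid K_zt\mid\neg\varphi\mid(\varphi\land\varphi)\mid K_z\alpha$ with $\alpha\in\mathcal{L}_{\mathsf{B}}$, $z\in Var$, $t\in\mathsf{Term}$. Models: $M=(\mathbf{D},\mathbf{I},\Sigma,\sim)$ with $\mathbf{D}$ nonempty finite; $\mathbf{I}(P)\subseteq\mathbf{D}^m$ for $m$-ary $P$, $\mathbf{R}:=\mathbf{I}(R)$ serial; $\mathbf{I}(c)\in\mathbf{D}$ for $c\in Cons$, every element of $\mathbf{D}$ named by some constant; $\Sigma\subseteq\mathbf{D}^{Var}$ nonempty (situations); $\sim_x,\sim_y$ equivalence relations on $\Sigma$. $\mathbb{D}^0(s)=\{s\}$, $\mathbb{D}^{m+1}(s)=\mathbb{D}^m(s)\cup\{t:\exists u\in\mathbb{D}^m(s),(u,t)\in\mathbf{R}\text{ or }(t,u)\in\mathbf{R}\}$. $M$ is $k$-sight if $\sigma\sim_z\sigma'$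 implies $\sigma(z')=\sigma'(z')$ for every $z'\in Var$ with $\sigma(z')\in\mathbb{D}^k(\sigma(z))$. Semantics: $t^{(\mathbf{I},\sigma)}$ is $\mathbf{I}(t)$ or $\sigma(t)$; $P(t_1,\dots,t_m)$ true at $\sigma$ iff the tuple of values is in $\mathbf{I}(P)$; $t_1\equiv t_2$ iff equal values; Boolean standard; $K_zt$ true at $\sigma$ iff $t$ has the same value at all $\sigma'\in\Sigma$ with $\sigma'\sim_z\sigma$; $K_z\varphi$ true at $\sigma$ iff $\varphi$ true at all $\sigma'\in\Sigma$ with $\sigma'\sim_z\sigma$. *)

From mathcomp Require Import all_boot.
Unset Printing Implicit Defensive.

Inductive rec : Type :=
| RZero : rec
| RSucc : rec
| RProj : nat -> rec
| RComp : rec -> list rec -> rec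
| RPrim : rec -> rec -> rec
| RMin  : rec -> rec.

Inductive reval : rec -> seq nat -> nat -> Prop :=
| ev_zero xs : reval RZero xs 0
| ev_succ xs : reval RSucc xs (head 0 xs).+1
| ev_proj i xs : reval (RProj i) xs (nth 0 xs i)
| ev_comp f gs xs ys y :
    revals gs xs ys -> reval f ys y -> reval (RComp f gs) xs y
| ev_prim0 f g xs y :
    reval f xs y -> reval (RPrim f g) (0 :: xs) y
| ev_primS f g n xs r y :
    reval (RPrim f g) (n :: xs) r -> reval g (n :: r :: xs) y ->
    reval (RPrim f g) (n.+1 :: xs) y
| ev_min f xs n :
    reval f (n :: xs) 0 ->
    (forall m, m < n -> exists2 r, 0 < r & reval f (m :: xs) r) ->
    reval (RMin f) xs n
with revals : list rec -> seq nat -> seq nat -> Prop :=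
| evs_nil xs : revals nil xs [::]
| evs_cons g gs xs y ys :
    reval g xs y -> revals gs xs ys -> revals (g :: gs) xs (y :: ys).

Definition rec_decidable (P : nat -> Prop) : Prop :=
  exists f : rec, forall n,
    (P n -> reval f [:: n] 1) /\ (~ P n -> reval f [:: n] 0).

Definition npair (a b : nat) : nat := ((a + b) * (a + b).+1) %/ 2 + b.

Inductive var : Type := vx | vy.

Section Syntax.
Variable nc : nat.
Variable ar : nat -> nat.

Inductive term : Type :=
| TC : 'I_nc -> term
| TV : var -> term.

Inductive bform : Type :=
| BAtom (P : nat) : (ar P).-tuple term -> bform
| BEq : term -> term -> bform
| BNot : bform -> bform
| BAnd : bform -> bform -> bform.

Inductive form : Type :=
| FB : bform -> form
| FKt : var -> term -> form
| FNot : form -> form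
| FAnd : form -> form -> form
| FKa : var -> bform -> form.

Definition enc_var (z : var) : nat := if z is vx then 0 else 1.
Definition enc_term (t : term) : nat :=
  match t with TC c => npair 0 (nat_of_ord c) | TV z => npair 1 (enc_var z) end.
Fixpoint enc_terms (s : seq term) : nat :=
  if s is t :: s' then (npair (enc_term t) (enc_terms s')).+1 else 0.
Fixpoint enc_bform (a : bform) : nat :=
  match a with
  | BAtom P ts => npair 0 (npair P (enc_terms (tval ts)))
  | BEq t1 t2 => npair 1 (npair (enc_term t1) (enc_term t2))
  | BNot a1 => npair 2 (enc_bform a1)
  | BAnd a1 a2 => npair 3 (npair (enc_bform a1) (enc_bform a2))
  end.
Fixpoint enc_form (f : form) : nat :=
  match f with
  | FB a => npair 0 (enc_bform a)
  | FKt z t => npair 1 (npair (enc_var z) (enc_term t))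
  | FNot f1 => npair 2 (enc_form f1)
  | FAnd f1 f2 => npair 3 (npair (enc_form f1) (enc_form f2))
  | FKa z a => npair 4 (npair (enc_var z) (enc_bform a))
  end.

Record model : Type := Model {
  mdom : finType;
  minterp : nat -> seq mdom -> bool;
  mcons : 'I_nc -> mdom;
  msits : (var -> mdom) -> Prop;
  msim : var -> (var -> mdom) -> (var -> mdom) -> Prop
}.
Arguments minterp : clear implicits.
Arguments mcons : clear implicits.
Arguments msits : clear implicits.
Arguments msim : clear implicits.

Variable r : nat. (* index of R *)

Definition relR (M : model) (a b : mdom M) : Prop := minterp M r [:: a; b].

Definition is_model (M : model) : Prop :=
  [/\ (forall P (s : seq (mdom M)), minterp M P s -> size s = ar P),
      (forall a : mdom M, exists b, relR M a b),
      (forall d : mdom M, exists c, mcons M c = d),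
      (exists s, msits M s) &
      (forall z s, msits M s -> msim M z s s) /\
      (forall z s1 s2 s3, msits M s1 -> msits M s2 -> msits M s3 ->
         (msim M z s1 s2 -> msim M z s2 s1) /\
         (msim M z s1 s2 -> msim M z s2 s3 -> msim M z s1 s3))].

Fixpoint nbhd (M : model) (m : nat) (s t : mdom M) : Prop :=
  match m with
  | 0 => t = s
  | m'.+1 => nbhd M m' s t \/
             exists u, nbhd M m' s u /\ (relR M u t \/ relR M t u)
  end.

Definition k_sight (k : nat) (M : model) : Prop :=
  forall z s s', msits M s -> msits M s' -> msim M z s s' ->
    forall z', nbhd M k (s z) (s z') -> s z' = s' z'.

Definition teval (M : model) (s : var -> mdom M) (t : term) : mdom M :=
  match t with TC c => mcons M c | TV z => s z end.

Fixpoint bsat (M : model) (s : var -> mdom M) (a : bform) : Prop :=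
  match a with
  | BAtom P ts => minterp M P (map (teval M s) (tval ts))
  | BEq t1 t2 => teval M s t1 = teval M s t2
  | BNot a1 => ~ bsat M s a1
  | BAnd a1 a2 => bsat M s a1 /\ bsat M s a2
  end.

Fixpoint fsat (M : model) (s : var -> mdom M) (f : form) : Prop :=
  match f with
  | FB a => bsat M s a
  | FKt z t => forall s', msits M s' -> msim M z s s' -> teval M s' t = teval M s t
  | FNot f1 => ~ fsat M s f1
  | FAnd f1 f2 => fsat M s f1 /\ fsat M s f2
  | FKa z a => forall s', msits M s' -> msim M z s s' -> bsat M s' a
  end.

Definition satisfiable (k : nat) (f : form) : Prop :=
  exists (M : model) (s : var -> mdom M),
    [/\ is_model M, k_sight k M, msits M s & fsat M s f].

End Syntax.

From mathcomp Require Import all_boot boolp.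
Set Implicit Arguments. Unset Strict Implicit. Unset Printing Implicit Defensive.

(* Every element of a model is named by one of the [nc] constants. Leaving aside the
   predicates other than [R], a model with a current situation is therefore described, up
   to the choice of names, by a finite frame: the value of each constant, the relation [R],
   the situations and the relations [~x], [~y], all given on pairs of constants. Whether a
   model is k-sight depends only on its frame, so the frames of k-sight models form a fixed
   finite set. Over a frame, the other predicates matter for a formula only on the finitely
   many atoms it mentions; their interpretation can be guessed as a bit string whose length
   is primitive recursive in the code of the formula, and the truth value of the formula
   under a guess is computed by course-of-values recursion on codes. Satisfiability is thus
   a finite disjunction, over the realised frames, of bounded searches, evaluated by a
   primitive recursive program. *)

(** * Primitive recursive programs *)

Fixpoint peval (f : rec) (xs : seq nat) : nat :=
  match f with
  | RZero => 0
  | RSucc => (head 0 xs).+1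
  | RProj i => nth 0 xs i
  | RComp h gs => peval h (map (peval^~ xs) gs)
  | RPrim b s =>
      if xs is n :: ys then
        (fix loop m := if m is m'.+1 then peval s (m' :: loop m' :: ys) else peval b ys) n
      else 0
  | RMin _ => 0
  end.

(* [prim_safe nullary f]: [f] uses no minimisation and never applies primitive recursion to
   an empty argument list, on which [reval] is undefined; [nullary] tells whether [f] itself
   may be applied to the empty list. *)
Fixpoint prim_safe (nullary : bool) (f : rec) : bool :=
  match f with
  | RZero | RSucc | RProj _ => true
  | RComp h gs =>
      (fix all_safe gs := if gs is g :: gs' then prim_safe nullary g && all_safe gs' else true) gs
      && prim_safe (nilp gs) h
  | RPrim b s => [&& ~~ nullary, prim_safe true b & prim_safe false s]
  | RMin _ => false
  end.

Lemma reval_peval f nullary : prim_safe nullary f ->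
  forall xs, (~~ nullary -> 0 < size xs) -> reval f xs (peval f xs).
Proof.
move: f nullary; fix IH 1 => f; case: f => [||i|h gs|b s|g] nullary //=.
- by move=> _ xs _; apply: ev_zero.
- by move=> _ xs _; apply: ev_succ.
- by move=> _ xs _; apply: ev_proj.
- move=> /andP[safe_gs safe_h] xs xs_ok.
  apply: (@ev_comp _ _ _ (map (peval^~ xs) gs)); last first.
    by apply: (IH h (nilp gs)) => //; rewrite size_map; case: (gs).
  elim: gs safe_gs {safe_h} => [_|g gs IHgs /andP[safe_g safe_gs]]; first exact: evs_nil.
  by apply: evs_cons; [apply: (IH g nullary) | apply: IHgs].
- move=> /and3P[not_nullary safe_b safe_s] [|n ys]; first by move=> /(_ not_nullary).
  move=> _; elim: n => [|n IHn]; first by apply: ev_prim0; apply: (IH b true).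
  by apply: ev_primS; [apply: IHn | apply: (IH s false)].
Qed.

Lemma peval_comp h gs xs : peval (RComp h gs) xs = peval h (map (peval^~ xs) gs).
Proof. by []. Qed.
Lemma peval_proj i xs : peval (RProj i) xs = nth 0 xs i.
Proof. by []. Qed.
Lemma peval_succ xs : peval RSucc xs = (head 0 xs).+1.
Proof. by []. Qed.
Lemma peval_zero xs : peval RZero xs = 0.
Proof. by []. Qed.
Lemma peval_prim0 b s ys : peval (RPrim b s) (0 :: ys) = peval b ys.
Proof. by []. Qed.
Lemma peval_primS b s n ys :
  peval (RPrim b s) (n.+1 :: ys) = peval s (n :: peval (RPrim b s) (n :: ys) :: ys).
Proof. by []. Qed.

Arguments peval : simpl never.

(* Matching is syntactic, so that named programs stay folded until their own evaluation
   lemma is used. *)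
Ltac peval_step :=
  match goal with
  | |- context [peval (RComp ?h ?gs) ?xs] => rewrite (peval_comp h gs xs)
  | |- context [peval (RProj ?i) ?xs] => rewrite (peval_proj i xs)
  | |- context [peval RSucc ?xs] => rewrite (peval_succ xs)
  | |- context [peval RZero ?xs] => rewrite (peval_zero xs)
  | |- context [peval (RPrim ?b ?s) (0 :: ?ys)] => rewrite (peval_prim0 b s ys)
  | |- context [peval (RPrim ?b ?s) (?n.+1 :: ?ys)] => rewrite (peval_primS b s n ys)
  end.
Ltac peval_simpl := repeat (peval_step; rewrite /=).

Local Notation C := RComp.
Local Notation P := RProj.

Fixpoint const_rec k := if k is k'.+1 then C RSucc [:: const_rec k'] else RZero.
Lemma const_recE k xs : peval (const_rec k) xs = k.
Proof. by elim: k => [|k IH] /=; peval_simpl; rewrite ?IH. Qed.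
Lemma const_rec_safe nullary k : prim_safe nullary (const_rec k).
Proof. by elim: k => //= k ->. Qed.
Arguments const_rec : simpl never.

Definition add_rec := RPrim (P 0) (C RSucc [:: P 1]).
Lemma add_recE a b : peval add_rec [:: a; b] = a + b.
Proof. by rewrite /add_rec; elim: a => [|a IH]; peval_simpl; rewrite ?IH. Qed.

Definition mul_rec := RPrim RZero (C add_rec [:: P 1; P 2]).

Lemma mul_recE a b : peval mul_rec [:: a; b] = a * b.
Proof.
by rewrite /mul_rec; elim: a => [|a IH]; peval_simpl; rewrite // IH add_recE mulSn addnC.
Qed.

Definition pred_rec := RPrim RZero (P 0).
Lemma pred_recE a : peval pred_rec [:: a] = a.-1.
Proof. by rewrite /pred_rec; case: a => [|a]; peval_simpl. Qed.

Definition sub_rec := C (RPrim (P 0) (C pred_rec [:: P 1])) [:: P 1; P 0].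
Lemma sub_recE a b : peval sub_rec [:: a; b] = a - b.
Proof.
rewrite /sub_rec; peval_simpl; elim: b => [|b IH]; peval_simpl; first by rewrite subn0.
by rewrite IH pred_recE subnS.
Qed.

Definition eq0_rec := RPrim (const_rec 1) RZero.
Lemma eq0_recE a : peval eq0_rec [:: a] = (a == 0).
Proof. by rewrite /eq0_rec; case: a => [|a]; peval_simpl; rewrite ?const_recE. Qed.

Definition sgn_rec := C sub_rec [:: const_rec 1; C eq0_rec [:: P 0]].
Lemma sgn_recE a : peval sgn_rec [:: a] = (0 < a).
Proof. by rewrite /sgn_rec; peval_simpl; rewrite eq0_recE const_recE sub_recE; case: a. Qed.

Definition leq_rec := C eq0_rec [:: C sub_rec [:: P 0; P 1]].
Lemma leq_recE a b : peval leq_rec [:: a; b] = (a <= b).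
Proof. by rewrite /leq_rec; peval_simpl; rewrite sub_recE eq0_recE subn_eq0. Qed.

Definition eqn_rec := C mul_rec [:: C leq_rec [:: P 0; P 1]; C leq_rec [:: P 1; P 0]].
Lemma eqn_recE a b : peval eqn_rec [:: a; b] = (a == b).
Proof. by rewrite /eqn_rec; peval_simpl; rewrite !leq_recE mul_recE eqn_leq -mulnb. Qed.

Definition ite_rec :=
  C add_rec [:: C mul_rec [:: C sgn_rec [:: P 0]; P 1]; C mul_rec [:: C eq0_rec [:: P 0]; P 2]].
Lemma ite_recE c x y : peval ite_rec [:: c; x; y] = if 0 < c then x else y.
Proof.
rewrite /ite_rec; peval_simpl; rewrite sgn_recE eq0_recE !mul_recE add_recE.
by case: c => [|c]; rewrite ?mul0n ?mul1n ?addn0.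
Qed.

Definition sum_rec body := RPrim RZero (C add_rec [:: P 1; body]).
Lemma sum_recE body F N xs : (forall i a, peval body (i :: a :: xs) = F i) ->
  peval (sum_rec body) (N :: xs) = \sum_(i < N) F i.
Proof.
move=> bodyE; rewrite /sum_rec; elim: N => [|N IH]; peval_simpl; first by rewrite big_ord0.
by rewrite IH bodyE add_recE big_ord_recr.
Qed.

Definition exp2_rec := RPrim (const_rec 1) (C add_rec [:: P 1; P 1]).
Lemma exp2_recE n : peval exp2_rec [:: n] = 2 ^ n.
Proof.
rewrite /exp2_rec; elim: n => [|n IH]; peval_simpl; first by rewrite const_recE.
by rewrite IH add_recE expnS mul2n addnn.
Qed.

Definition iter_rec step := RPrim (P 0) (C step [:: P 1; P 3]).
Lemma iter_recE step (F : nat -> nat -> nat) :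
  (forall x p, peval step [:: x; p] = F p x) ->
  forall N x p, peval (iter_rec step) [:: N; x; p] = iter N (F p) x.
Proof.
by move=> stepE; rewrite /iter_rec; elim=> [|N IH] x p; peval_simpl; rewrite ?IH ?stepE.
Qed.

Fixpoint switch_from k tag (cs : seq rec) : rec :=
  if cs is c :: cs' then
    C ite_rec [:: C eqn_rec [:: tag; const_rec k]; c; switch_from k.+1 tag cs']
  else RZero.
Lemma switch_fromE k tag cs xs : peval (switch_from k tag cs) xs =
  if k <= peval tag xs then nth 0 [seq peval c xs | c <- cs] (peval tag xs - k) else 0.
Proof.
elim: cs k => [|c cs IH] k /=; peval_simpl; first by case: ifP; rewrite ?nth_nil.
rewrite const_recE eqn_recE IH ite_recE /=.
case: (ltngtP k (peval tag xs)) => [lt_kt|//|<-]; last by rewrite leqnn subnn.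
by rewrite -(subnSK lt_kt).
Qed.

Definition switch_rec := switch_from 0.
Lemma switch_recE tag cs xs :
  peval (switch_rec tag cs) xs = nth 0 [seq peval c xs | c <- cs] (peval tag xs).
Proof. by rewrite switch_fromE subn0. Qed.

Definition table_rec l := switch_rec (P 0) (map const_rec l).
Lemma table_recE l x : peval (table_rec l) [:: x] = nth 0 l x.
Proof.
rewrite switch_recE -map_comp (eq_map (fun c => const_recE c _)) map_id.
by peval_simpl.
Qed.
Lemma table_rec_safe nullary l : prim_safe nullary (table_rec l).
Proof.
suff all_k k : prim_safe nullary (switch_from k (P 0) (map const_rec l)) by apply: all_k.
by elim: l k => //= a l IH k; rewrite IH !const_rec_safe /=; case: (nullary).
Qed.

Definition btable_rec (l : seq bool) := table_rec (map nat_of_bool l).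
Lemma btable_recE l x : peval (btable_rec l) [:: x] = nth false l x.
Proof. by rewrite table_recE; elim: l x => [|a l IH] [|x] //=; rewrite nth_nil. Qed.

Fixpoint sum_progs (ps : seq rec) : rec :=
  if ps is p :: ps' then C add_rec [:: p; sum_progs ps'] else RZero.
Lemma sum_progsE ps xs : peval (sum_progs ps) xs = sumn [seq peval p xs | p <- ps].
Proof. by elim: ps => [|p ps IH] /=; peval_simpl; rewrite ?add_recE ?IH. Qed.
Lemma sum_progs_safe ps : all (prim_safe false) ps -> prim_safe false (sum_progs ps).
Proof. by elim: ps => //= p ps IH /andP[-> /IH ->]. Qed.

Definition forall_rec bound n body :=
  C eq0_rec [:: C (sum_rec (C eq0_rec [:: body])) (bound :: map P (iota 0 n))].
Lemma forall_recE bound n body xs (F : nat -> bool) :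
  size xs = n -> (forall j a, peval body (j :: a :: xs) = F j) ->
  peval (forall_rec bound n body) xs = [forall j : 'I_(peval bound xs), F j].
Proof.
move=> size_xs bodyE; rewrite /forall_rec; peval_simpl.
have -> : map (peval^~ xs) (map P (iota 0 n)) = xs.
  by rewrite -map_comp -size_xs -[RHS](mkseq_nth 0).
rewrite (@sum_recE _ (fun j => ~~ F j)) => [|j a]; last by peval_simpl; rewrite bodyE eq0_recE eqb0.
rewrite eq0_recE sum_nat_eq0.
by congr (nat_of_bool _); apply: eq_forallb => j; case: (F j).
Qed.

(** * Cantor pairing *)

Definition tri s := \sum_(i < s.+1) i.
Definition diag n := \sum_(i < n) (tri i.+1 <= n).
Definition unpair2 n := n - tri (diag n).
Definition unpair1 n := diag n - unpair2 n.

Lemma triS s : tri s.+1 = tri s + s.+1.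
Proof. by rewrite /tri big_ord_recr. Qed.
Lemma leq_tri : {homo tri : a b / a <= b}.
Proof. by apply: homo_leq => [//|b a c|n]; [apply: leq_trans | rewrite triS leq_addr]. Qed.
Lemma leq_self_tri s : s <= tri s.
Proof. by elim: s => // s IH; rewrite triS addnS ltnS leq_addl. Qed.
Lemma npair_tri a b : npair a b = tri (a + b) + b.
Proof.
have -> : tri (a + b) = 'C((a + b).+1, 2) by rewrite /tri -bin2_sum big_mkord.
by rewrite /npair bin2 /= -divn2 mulnC.
Qed.

Lemma diag_npair a b : diag (npair a b) = a + b.
Proof.
rewrite /diag npair_tri; set n := tri (a + b) + b.
have below i : (tri i.+1 <= n) = (i < a + b).
  case: ltnP => [lt_i|le_i]; first exact: leq_trans (leq_tri lt_i) (leq_addr _ _).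
  apply/negbTE; rewrite -ltnNge /n; apply: leq_trans (leq_tri (le_i : (a + b).+1 <= i.+1)).
  by rewrite triS ltn_add2l ltnS leq_addl.
have le_ab_n : a + b <= n by apply: leq_trans (leq_self_tri _) (leq_addr _ _).
rewrite (eq_bigr (fun i : 'I_n => (i < a + b) : nat)) => [|i _]; last by rewrite below.
rewrite -(big_mkord xpredT (fun i => (i < a + b) : nat)) (big_cat_nat (leq0n _) le_ab_n) /=.
have -> : \sum_(0 <= i < a + b) (i < a + b : nat) = a + b.
  rewrite big_nat_cond (eq_bigr (fun=> 1)) => [|i /andP[/andP[_ ->]]] //.
  by rewrite -big_nat_cond sum_nat_const_nat subn0 muln1.
rewrite big_nat_cond big1 ?addn0 // => i /andP[/andP[le_i _] _].
by rewrite ltnNge le_i.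
Qed.

Lemma npairK2 a b : unpair2 (npair a b) = b.
Proof. by rewrite /unpair2 diag_npair npair_tri addKn. Qed.
Lemma npairK1 a b : unpair1 (npair a b) = a.
Proof. by rewrite /unpair1 npairK2 diag_npair addnK. Qed.
Lemma npair_inj a b c d : npair a b = npair c d -> a = c /\ b = d.
Proof.
by move=> e; split; [rewrite -(npairK1 a b) e npairK1 | rewrite -(npairK2 a b) e npairK2].
Qed.

Lemma leq_npair a a' b b' : a <= a' -> b <= b' -> npair a b <= npair a' b'.
Proof. by move=> le_a le_b; rewrite !npair_tri leq_add // leq_tri // leq_add. Qed.
Lemma leq_npairl a b : a <= npair a b.
Proof.
by rewrite npair_tri (leq_trans (leq_addr b a)) // (leq_trans (leq_self_tri _)) ?leq_addr.
Qed.
Lemma leq_npairr a b : b <= npair a b.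
Proof. by rewrite npair_tri leq_addl. Qed.
Lemma ltn_npairr a b : 0 < a -> b < npair a b.
Proof.
move=> a_gt0; rewrite npair_tri -[ltnLHS]add0n ltn_add2r.
by apply: leq_trans (leq_self_tri _); rewrite addn_gt0 a_gt0.
Qed.

Definition tri_rec := C (sum_rec (P 0)) [:: C RSucc [:: P 0]].
Lemma tri_recE s : peval tri_rec [:: s] = tri s.
Proof. by rewrite /tri_rec; peval_simpl; rewrite (@sum_recE _ id) // => i a; peval_simpl. Qed.

Definition npair_rec := C add_rec [:: C tri_rec [:: C add_rec [:: P 0; P 1]]; P 1].
Lemma npair_recE a b : peval npair_rec [:: a; b] = npair a b.
Proof. by rewrite /npair_rec; peval_simpl; rewrite !add_recE tri_recE npair_tri. Qed.

Definition diag_rec :=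
  C (sum_rec (C leq_rec [:: C tri_rec [:: C RSucc [:: P 0]]; P 2])) [:: P 0; P 0].
Lemma diag_recE n : peval diag_rec [:: n] = diag n.
Proof.
rewrite /diag_rec; peval_simpl.
by rewrite (@sum_recE _ (fun i => tri i.+1 <= n)) // => i a; peval_simpl; rewrite tri_recE leq_recE.
Qed.

Definition unpair2_rec := C sub_rec [:: P 0; C tri_rec [:: C diag_rec [:: P 0]]].
Lemma unpair2_recE n : peval unpair2_rec [:: n] = unpair2 n.
Proof. by rewrite /unpair2_rec; peval_simpl; rewrite diag_recE tri_recE sub_recE. Qed.

Definition unpair1_rec := C sub_rec [:: C diag_rec [:: P 0]; C unpair2_rec [:: P 0]].
Lemma unpair1_recE n : peval unpair1_rec [:: n] = unpair1 n.
Proof. by rewrite /unpair1_rec; peval_simpl; rewrite diag_recE unpair2_recE sub_recE. Qed.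

(** * Binary digits and course-of-values tables *)

Definition bitn x i := odd (x %/ 2 ^ i).

Lemma bitn_add H c A p : H < 2 ^ A ->
  bitn (H + c * 2 ^ A) p = if p < A then bitn H p else bitn c (p - A).
Proof.
move=> lt_H; rewrite /bitn; case: ltnP => [lt_pA|le_Ap].
  have -> : 2 ^ A = 2 ^ (A - p) * 2 ^ p by rewrite -expnD subnK // ltnW.
  rewrite mulnA divnDMl ?expn_gt0 // oddD oddM oddX.
  by rewrite subn_eq0 leqNgt lt_pA /= andbF addbF.
rewrite -{1}(subnKC le_Ap) expnD divnMA.
by rewrite addnC divnMDl ?expn_gt0 // (divn_small lt_H) addn0.
Qed.

Definition bits_sum (v : nat -> bool) W := \sum_(j < W) v j * 2 ^ j.

Lemma bits_sum_lt v W : bits_sum v W < 2 ^ W.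
Proof.
elim: W => [|W IH]; first by rewrite /bits_sum big_ord0.
rewrite /bits_sum big_ord_recr /= -/(bits_sum v W) expnS mul2n -addnn.
by rewrite -addSn leq_add //; case: (v W); rewrite ?mul1n ?mul0n ?expn_gt0.
Qed.

Lemma bitn_small x p : x < 2 ^ p -> bitn x p = false.
Proof. by move=> lt_x; rewrite /bitn divn_small. Qed.

Lemma bitn_bits_sum v W i : bitn (bits_sum v W) i = (i < W) && v i.
Proof.
elim: W i => [|W IH] i; first by rewrite /bits_sum big_ord0 /bitn div0n.
rewrite /bits_sum big_ord_recr /= -/(bits_sum v W) bitn_add ?bits_sum_lt // IH.
case: (ltngtP i W) => [lt_iW|lt_Wi|->]; first by rewrite ltnS ltnW.
  rewrite ltnS leqNgt lt_Wi bitn_small //.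
  by apply: leq_trans (ltn_expl _ (isT : 1 < 2)); rewrite ltnS; case: (v W); rewrite //= subn_gt0.
by rewrite leqnn subnn /bitn expn0 divn1; case: (v W).
Qed.

Lemma bits_sum_exists (v : nat -> bool) W :
  exists2 b, b < 2 ^ W & forall i, i < W -> bitn b i = v i.
Proof. by exists (bits_sum v W) => [|i lt_iW]; rewrite ?bits_sum_lt ?bitn_bits_sum ?lt_iW. Qed.

Definition half_rec :=
  RPrim RZero (C add_rec [:: P 1; C sub_rec [:: P 0; C add_rec [:: P 1; P 1]]]).
Lemma half_recE x : peval half_rec [:: x] = x./2.
Proof.
rewrite /half_rec; elim: x => [|x IH]; peval_simpl => //.
rewrite IH !add_recE sub_recE addnn.
by rewrite -{2}(odd_double_half x) addnK uphalf_half addnC.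
Qed.

Definition odd_rec := C sub_rec [:: P 0; C add_rec [:: C half_rec [:: P 0]; C half_rec [:: P 0]]].
Lemma odd_recE x : peval odd_rec [:: x] = odd x.
Proof.
rewrite /odd_rec; peval_simpl.
by rewrite half_recE add_recE sub_recE addnn -{1}(odd_double_half x) addnK.
Qed.

Definition bit_rec := C odd_rec [:: C (iter_rec (C half_rec [:: P 0])) [:: P 1; P 0; P 0]].
Lemma bit_recE x i : peval bit_rec [:: x; i] = bitn x i.
Proof.
have iter_half j y : iter j half y = y %/ 2 ^ j.
  by elim: j => [|j IH] /=; rewrite ?divn1 // IH -divn2 -divnMA expnS mulnC.
rewrite /bit_rec; peval_simpl.
rewrite (@iter_recE _ (fun=> half)) ?odd_recE ?iter_half // => y p.
by peval_simpl; rewrite half_recE.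
Qed.

Section PairIndex.
Variables (m u v : nat).
Hypothesis lt_vm : v < m.

Lemma divn_pair : (u * m + v) %/ m = u.
Proof. by rewrite divnMDl ?divn_small ?addn0 // (leq_ltn_trans (leq0n v)). Qed.
Lemma modn_pair : (u * m + v) %% m = v.
Proof. by rewrite modnMDl modn_small. Qed.
Lemma ltn_pair : u < m -> u * m + v < m * m.
Proof.
move=> lt_um; apply: leq_trans (_ : u.+1 * m <= _); first by rewrite mulSn addnC ltn_add2r.
by rewrite leq_mul2r lt_um orbT.
Qed.

End PairIndex.

Lemma ltn_divn_sq m j : j < m * m -> j %/ m < m.
Proof. by move=> lt_j; rewrite ltn_divLR // lt0n; apply: contraTneq lt_j => ->. Qed.
Lemma ltn_modn_sq m j : j < m * m -> j %% m < m.
Proof. by move=> lt_j; rewrite ltn_pmod // lt0n; apply: contraTneq lt_j => ->. Qed.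

Lemma ltn_block S m j N : j < S -> (S * m + j < S * N) = (m < N).
Proof.
move=> lt_jS; case: (ltnP m N) => [lt_mN|le_Nm].
  apply: leq_trans (_ : S * m.+1 <= _); first by rewrite mulnS addnC ltn_add2r.
  by rewrite leq_mul2l lt_mN orbT.
by apply/negbTE; rewrite -leqNgt (leq_trans _ (leq_addr _ _)) // leq_mul2l le_Nm orbT.
Qed.

Section BitTable.
Variables (S : nat) (step : nat -> nat -> nat -> bool).

Fixpoint bit_table N :=
  if N is m.+1 then bit_table m + bits_sum (step (bit_table m) m) S * 2 ^ (S * m) else 0.

Lemma bit_table_lt N : bit_table N < 2 ^ (S * N).
Proof.
elim: N => [|N IH] /=; first by rewrite muln0.
rewrite mulnS expnD.
apply: leq_trans (_ : (bits_sum (step (bit_table N) N) S).+1 * 2 ^ (S * N) <= _).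
  by rewrite mulSn ltn_add2r.
by rewrite leq_mul2r bits_sum_lt orbT.
Qed.

Lemma bitn_bit_table N m j : m < N -> j < S ->
  bitn (bit_table N) (S * m + j) = step (bit_table m) m j.
Proof.
move=> + lt_jS; elim: N => [|N IH] // lt_mN /=.
rewrite bitn_add ?bit_table_lt // ltn_block //.
case: ltnP => [/IH //|le_Nm].
have -> : m = N by apply/eqP; rewrite eqn_leq le_Nm -ltnS lt_mN.
by rewrite addKn bitn_bits_sum lt_jS.
Qed.

End BitTable.

Definition bit_table_rec S step :=
  let row := C (sum_rec (C mul_rec [:: C step [:: P 2; P 3; P 4; P 0]; C exp2_rec [:: P 0]]))
               [:: const_rec S; P 0; P 1; P 2] in
  RPrim (const_rec 0) (C add_rec [:: P 1; C mul_rec [:: C row [:: P 2; P 1; P 0];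
                                  C exp2_rec [:: C mul_rec [:: const_rec S; P 0]]]]).

Lemma bit_table_recE S step_rec (step : nat -> nat -> nat -> nat -> bool) :
  (forall p H m j, peval step_rec [:: p; H; m; j] = step p H m j) ->
  forall N p, peval (bit_table_rec S step_rec) [:: N; p] = bit_table S (step p) N.
Proof.
move=> stepE N p; rewrite /bit_table_rec; elim: N => [|N IH]; peval_simpl.
  by rewrite const_recE.
rewrite IH !const_recE (@sum_recE _ (fun j => step p (bit_table S (step p) N) N j * 2 ^ j)).
  by rewrite !mul_recE exp2_recE add_recE.
by move=> j a; peval_simpl; rewrite stepE exp2_recE mul_recE.
Qed.

Definition recE := (const_recE, add_recE, mul_recE, pred_recE, sub_recE, eq0_recE, sgn_recE,
  leq_recE, eqn_recE, ite_recE, exp2_recE, table_recE, btable_recE, npair_recE, unpair1_recE,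
  unpair2_recE, bit_recE, lt0b).

(** * Model checking over a frame *)

(* A frame describes a model whose elements are named by the constants ['I_nc]: for each
   constant, a canonical constant with the same value; the relation [R] and the set of
   situations, [u * nc + v] standing for the pair of the elements named [u] and [v]; the
   relations [~x] and [~y], [j * (nc * nc) + j'] standing for the pair of situations
   [(j, j')]; and the current situation. *)
Definition frame nc : finType :=
  (nc.-tuple 'I_nc * (nc * nc).-tuple bool * (nc * nc).-tuple bool
   * (nc * nc * (nc * nc)).-tuple bool * (nc * nc * (nc * nc)).-tuple bool * 'I_(nc * nc))%type.

Section Checker.
Variables (nc r : nat) (F : frame nc).
Local Notation S := (nc * nc).

Definition cnames := map val F.1.1.1.1.1.
Definition xnames := [seq nth 0 cnames (j %/ nc) | j <- iota 0 S].
Definition ynames := [seq nth 0 cnames (j %% nc) | j <- iota 0 S].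
Definition rel_bit u v := nth false F.1.1.1.1.2 (u * nc + v).
Definition sit_bit j := nth false F.1.1.1.2 j.
Definition sim_bits z : seq bool := if z == 0 then F.1.1.2 else F.1.2.
Definition cur_sit := val F.2.

Definition term_value j e :=
  if unpair1 e == 0 then nth 0 cnames (unpair2 e)
  else nth 0 (if unpair2 e == 0 then xnames else ynames) j.

Definition term_value_rec :=
  C ite_rec [:: C eq0_rec [:: C unpair1_rec [:: P 1]];
    C (table_rec cnames) [:: C unpair2_rec [:: P 1]];
    C ite_rec [:: C eq0_rec [:: C unpair2_rec [:: P 1]];
      C (table_rec xnames) [:: P 0]; C (table_rec ynames) [:: P 0]]].
Lemma term_value_recE j e : peval term_value_rec [:: j; e] = term_value j e.
Proof.
rewrite /term_value_rec; peval_simpl; rewrite !recE /term_value.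
by case: (unpair1 e == 0); case: (unpair2 e == 0).
Qed.

(* The state of [key_step j] is [npair L acc], [L] the code of the terms still to be read. *)
Definition key_step j st :=
  let L := unpair1 st in
  if L == 0 then st
  else npair (unpair2 L.-1) (npair (unpair2 st) (term_value j (unpair1 L.-1))).+1.
Definition terms_key j L := unpair2 (iter L (key_step j) (npair L 0)).

Definition key_step_rec :=
  let L := C unpair1_rec [:: P 0] in
  C ite_rec [:: C eq0_rec [:: L]; P 0;
    C npair_rec [:: C unpair2_rec [:: C pred_rec [:: L]];
      C RSucc [:: C npair_rec [:: C unpair2_rec [:: P 0];
        C term_value_rec [:: P 1; C unpair1_rec [:: C pred_rec [:: L]]]]]]].
Lemma key_step_recE st j : peval key_step_rec [:: st; j] = key_step j st.
Proof.
rewrite /key_step_rec; peval_simpl; rewrite !recE term_value_recE /key_step.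
by case: eqP.
Qed.

Definition terms_key_rec :=
  C unpair2_rec [:: C (iter_rec key_step_rec) [:: P 1; C npair_rec [:: P 1; const_rec 0]; P 0]].
Lemma terms_key_recE j L : peval terms_key_rec [:: j; L] = terms_key j L.
Proof.
rewrite /terms_key_rec; peval_simpl.
by rewrite !recE (@iter_recE _ key_step) // => st j'; rewrite key_step_recE.
Qed.

(* For [p = r], [L] is [npair e1 (npair e2 0).+1], with [e1], [e2] the codes of the arguments. *)
Definition atom_bit b j q :=
  let p := unpair1 q in let L := (unpair2 q).-1 in
  if p == r then rel_bit (term_value j (unpair1 L)) (term_value j (unpair1 (unpair2 L).-1))
  else bitn b (npair p (terms_key j (unpair2 q))).

Definition atom_rec :=
  let L := C pred_rec [:: C unpair2_rec [:: P 2]] in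
  C ite_rec [:: C eqn_rec [:: C unpair1_rec [:: P 2]; const_rec r];
    C (btable_rec F.1.1.1.1.2) [:: C add_rec [::
        C mul_rec [:: C term_value_rec [:: P 1; C unpair1_rec [:: L]]; const_rec nc];
        C term_value_rec [:: P 1; C unpair1_rec [:: C pred_rec [:: C unpair2_rec [:: L]]]]]];
    C bit_rec [:: P 0; C npair_rec [:: C unpair1_rec [:: P 2];
                                       C terms_key_rec [:: P 1; C unpair2_rec [:: P 2]]]]].
Lemma atom_recE b j q : peval atom_rec [:: b; j; q] = atom_bit b j q.
Proof.
rewrite /atom_rec; peval_simpl; rewrite !recE !term_value_recE terms_key_recE ?recE /atom_bit /=.
by case: (unpair1 q == r).
Qed.

Definition cell_rec h c := C bit_rec [:: h; C add_rec [:: C mul_rec [:: const_rec S; c]; P 3]].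

Definition bform_step b H m j :=
  let q := unpair2 m in
  match unpair1 m with
  | 0 => atom_bit b j q
  | 1 => term_value j (unpair1 q) == term_value j (unpair2 q)
  | 2 => ~~ bitn H (S * q + j)
  | 3 => bitn H (S * unpair1 q + j) && bitn H (S * unpair2 q + j)
  | _ => false
  end.

Definition bform_step_rec :=
  let q := C unpair2_rec [:: P 2] in
  switch_rec (C unpair1_rec [:: P 2])
    [:: C atom_rec [:: P 0; P 3; q];
        C eqn_rec [:: C term_value_rec [:: P 3; C unpair1_rec [:: q]];
                      C term_value_rec [:: P 3; C unpair2_rec [:: q]]];
        C eq0_rec [:: cell_rec (P 1) q];
        C mul_rec [:: cell_rec (P 1) (C unpair1_rec [:: q]);
                      cell_rec (P 1) (C unpair2_rec [:: q])]].
Lemma bform_step_recE b H m j : peval bform_step_rec [:: b; H; m; j] = bform_step b H m j.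
Proof.
rewrite /bform_step_rec /cell_rec switch_recE /=; peval_simpl.
rewrite !recE atom_recE !term_value_recE ?recE /bform_step.
by case: (unpair1 m) => [|[|[|[|t]]]] //=; rewrite ?eqb0 ?mulnb ?nth_nil.
Qed.

Definition knows z j (Q : nat -> bool) :=
  [forall j' : 'I_S, sit_bit j' && nth false (sim_bits z) (j * S + j') ==> Q j'].

Definition knows_rec n Q :=
  let sim := C ite_rec [:: C eq0_rec [:: P 2];
    C (btable_rec F.1.1.2) [:: C add_rec [:: C mul_rec [:: P 3; const_rec S]; P 0]];
    C (btable_rec F.1.2) [:: C add_rec [:: C mul_rec [:: P 3; const_rec S]; P 0]]] in
  forall_rec (const_rec S) n
    (C eq0_rec [:: C mul_rec [:: C mul_rec [:: C (btable_rec F.1.1.1.2) [:: P 0]; sim];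
                                 C eq0_rec [:: Q]]]).
Lemma knows_recE n Q (QF : nat -> bool) z j xs : size xs = n.-2 -> 1 < n ->
  (forall j' a, peval Q [:: j', a, z, j & xs] = QF j') ->
  peval (knows_rec n Q) [:: z, j & xs] = knows z j QF.
Proof.
move=> size_xs lt1n QE; rewrite /knows_rec (@forall_recE _ _ _ _ (fun j' =>
  sit_bit j' && nth false (sim_bits z) (j * S + j') ==> QF j')) /=.
- by rewrite const_recE.
- by rewrite size_xs; case: n lt1n {size_xs} => [|[|n]].
move=> j' a; peval_simpl; rewrite !recE QE /sim_bits /sit_bit.
by case: (z == 0); case: (nth false _ j'); case: nth; case: (QF j').
Qed.

Definition form_step BHf H m j :=
  let q := unpair2 m in
  match unpair1 m with
  | 0 => bitn BHf (S * q + j)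
  | 1 => knows (unpair1 q) j (fun j' => term_value j' (unpair2 q) == term_value j (unpair2 q))
  | 2 => ~~ bitn H (S * q + j)
  | 3 => bitn H (S * unpair1 q + j) && bitn H (S * unpair2 q + j)
  | 4 => knows (unpair1 q) j (fun j' => bitn BHf (S * unpair2 q + j'))
  | _ => false
  end.

Definition form_step_rec :=
  let q := C unpair2_rec [:: P 2] in
  switch_rec (C unpair1_rec [:: P 2])
    [:: cell_rec (P 0) q;
        C (knows_rec 3 (C eqn_rec [:: C term_value_rec [:: P 0; P 4];
                                      C term_value_rec [:: P 3; P 4]]))
          [:: C unpair1_rec [:: q]; P 3; C unpair2_rec [:: q]];
        C eq0_rec [:: cell_rec (P 1) q];
        C mul_rec [:: cell_rec (P 1) (C unpair1_rec [:: q]); cell_rec (P 1) (C unpair2_rec [:: q])];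
        C (knows_rec 4 (C bit_rec [:: P 4; C add_rec [:: C mul_rec [:: const_rec S; P 5]; P 0]]))
          [:: C unpair1_rec [:: q]; P 3; P 0; C unpair2_rec [:: q]]].
Lemma form_step_recE BHf H m j : peval form_step_rec [:: BHf; H; m; j] = form_step BHf H m j.
Proof.
rewrite /form_step_rec /cell_rec switch_recE /=; peval_simpl; rewrite !recE.
rewrite (@knows_recE 3 _ (fun j' => term_value j' (unpair2 (unpair2 m)) ==
                                    term_value j (unpair2 (unpair2 m)))) => // [|j' a]; last first.
  by peval_simpl; rewrite !term_value_recE eqn_recE.
rewrite (@knows_recE 4 _ (fun j' => bitn BHf (S * unpair2 (unpair2 m) + j')))
  => // [|j' a]; last first.
  by peval_simpl; rewrite !recE.
by rewrite /form_step; case: (unpair1 m) => [|[|[|[|[|t]]]]] //=; rewrite ?eqb0 ?mulnb ?nth_nil.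
Qed.

(* Row [m] of the inner table lists the truth values of the [L_B] formula coded [m] in all
   [nc * nc] situations under the guess [b]; the outer table does the same for [L^-]
   formulas, reading those of the form [FB a] and [FKa z a] from the inner one. *)
Definition holds n b :=
  bitn (bit_table S (form_step (bit_table S (bform_step b) n.+1)) n.+1) (S * n + cur_sit).

Definition holds_rec :=
  C bit_rec [:: C (bit_table_rec S form_step_rec)
                  [:: C RSucc [:: P 0];
                      C (bit_table_rec S bform_step_rec) [:: C RSucc [:: P 0]; P 1]];
                C add_rec [:: C mul_rec [:: const_rec S; P 0]; const_rec cur_sit]].
Lemma holds_recE n b : peval holds_rec [:: n; b] = holds n b.
Proof.
rewrite /holds_rec; peval_simpl.
by rewrite (bit_table_recE _ bform_step_recE) (bit_table_recE _ form_step_recE) !recE.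
Qed.

Definition atoms_bound n := (npair n (iter n (fun h => (npair h nc).+1) 0)).+1.

Definition atoms_bound_rec :=
  C RSucc [:: C npair_rec [:: P 0; C (iter_rec (C RSucc [:: C npair_rec [:: P 0; const_rec nc]]))
                                     [:: P 0; const_rec 0; P 0]]].
Lemma atoms_bound_recE n : peval atoms_bound_rec [:: n] = atoms_bound n.
Proof.
rewrite /atoms_bound_rec; peval_simpl.
by rewrite (@iter_recE _ (fun _ h => (npair h nc).+1)) => [|h p]; peval_simpl; rewrite !recE.
Qed.

Definition sat_in n := [exists b : 'I_(2 ^ atoms_bound n), holds n b].

Definition sat_in_rec :=
  C eq0_rec [:: forall_rec (C exp2_rec [:: C atoms_bound_rec [:: P 0]]) 1
                           (C eq0_rec [:: C holds_rec [:: P 2; P 0]])].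
Lemma sat_in_recE n : peval sat_in_rec [:: n] = sat_in n.
Proof.
rewrite /sat_in_rec; peval_simpl.
rewrite (@forall_recE _ _ _ _ (fun b => ~~ holds n b)) // => [|b a]; last first.
  by peval_simpl; rewrite holds_recE eq0_recE eqb0.
peval_simpl; rewrite exp2_recE atoms_bound_recE eq0_recE eqb0 negb_forall.
by congr (nat_of_bool _); apply: eq_existsb => b; rewrite negbK.
Qed.

Lemma sat_in_rec_safe : prim_safe false sat_in_rec.
Proof. by cbn; rewrite ?table_rec_safe ?const_rec_safe. Qed.

End Checker.

(** * Correctness of the model checker *)

Lemma nth_mktuple_nat T n (f : 'I_n -> T) x0 i (lt_in : i < n) :
  nth x0 [tuple f j | j < n] i = f (Ordinal lt_in).
Proof. by rewrite -{1}[i]/(nat_of_ord (Ordinal lt_in)) nth_mktuple. Qed.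

Section Semantics.
Variables (nc : nat) (ar : nat -> nat) (r : nat) (c0 : 'I_nc) (M : model nc).
Hypothesis M_named : forall d : mdom nc M, exists c, mcons nc M c = d.
Local Notation S := (nc * nc).
Local Notation D := (mdom nc M).

Definition name (d : D) : 'I_nc := odflt c0 [pick c | mcons nc M c == d].
Definition const_val (u : nat) : D := mcons nc M (insubd c0 u).
Definition situation (j : nat) : var -> D :=
  fun z => const_val (if z is vx then j %/ nc else j %% nc).
Definition sit_index (s : var -> D) := name (s vx) * nc + name (s vy).

Lemma nameK d : mcons nc M (name d) = d.
Proof.
rewrite /name; case: pickP => [c /eqP //|none].
by have [c cd] := M_named d; move: (none c); rewrite cd eqxx.
Qed.
Lemma const_val_name d : const_val (name d) = d.
Proof. by rewrite /const_val valKd nameK. Qed.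
Lemma name_inj : injective name.
Proof. by move=> d d' e; rewrite -(const_val_name d) e const_val_name. Qed.
Lemma const_val_ord (c : 'I_nc) : const_val c = mcons nc M c.
Proof. by rewrite /const_val valKd. Qed.

Lemma sit_index_lt s : sit_index s < S.
Proof. exact: ltn_pair. Qed.
Lemma situation_index s : situation (sit_index s) = s.
Proof.
by apply: funext => -[]; rewrite /situation /sit_index ?divn_pair ?modn_pair // const_val_name.
Qed.

Definition frame_of (s : var -> D) : frame nc :=
  ([tuple name (const_val i) | i < nc],
   [tuple minterp nc M r [:: situation i vx; situation i vy] | i < S],
   [tuple `[< msits nc M (situation i) >] | i < S],
   [tuple `[< msim nc M vx (situation (i %/ S)) (situation (i %% S)) >] | i < S * S],
   [tuple `[< msim nc M vy (situation (i %/ S)) (situation (i %% S)) >] | i < S * S],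
   Ordinal (sit_index_lt s)).

Definition reinterp (I : nat -> seq D -> bool) : model nc :=
  Model nc D I (mcons nc M) (msits nc M) (msim nc M).

Lemma teval_reinterp I s t : teval nc (reinterp I) s t = teval nc M s t.
Proof. by case: t. Qed.

Definition preds_interp (A : nat -> seq nat -> bool) p (l : seq D) :=
  if p == r then minterp nc M r l else (size l == ar p) && A p [seq val (name d) | d <- l].
Definition with_preds A := reinterp (preds_interp A).

Lemma nbhd_with_preds A m (a b : D) : nbhd nc r (with_preds A) m a b <-> nbhd nc r M m a b.
Proof.
have relR_eq x y : relR nc r (with_preds A) x y = relR nc r M x y.
  by rewrite /relR /= /preds_interp eqxx.
by elim: m b => [|m IH] b //=; rewrite /relR in relR_eq *; setoid_rewrite IH;
  setoid_rewrite relR_eq.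
Qed.

Lemma with_preds_model A k : is_model nc ar r M -> k_sight nc r k M ->
  is_model nc ar r (with_preds A) /\ k_sight nc r k (with_preds A).
Proof.
case=> size_ok serial named nonempty equiv k_M; split.
  split=> //= [p l|a].
    by rewrite /preds_interp; case: eqP => [->|_ /andP[/eqP]]; [apply: size_ok|].
  by have [b Rab] := serial a; exists b; rewrite /relR /= /preds_interp eqxx.
by move=> z s s' sit_s sit_s' sim_ss' z' /nbhd_with_preds; apply: k_M.
Qed.

Lemma size_enc_terms (ts : seq (term nc)) : size ts <= enc_terms nc ts.
Proof. by elim: ts => //= t ts IH; rewrite ltnS (leq_trans IH) ?leq_npairr. Qed.

Section Reinterp.
Variable I : nat -> seq D -> bool.

Definition agrees_below n :=
  forall p (l : seq D), p <= n -> size l <= n -> I p l = minterp nc M p l.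

Lemma agrees_below_le m n : m <= n -> agrees_below n -> agrees_below m.
Proof. by move=> le_mn agree p l le_p le_l; apply: agree; apply: leq_trans le_mn. Qed.

Lemma bsat_reinterp (a : bform nc ar) s : agrees_below (enc_bform nc ar a) ->
  bsat nc ar (reinterp I) s a <-> bsat nc ar M s a.
Proof.
elim: a => [p ts|t1 t2|a IH|a1 IH1 a2 IH2] /= agree.
- rewrite (eq_map (@teval_reinterp I s)) agree // ?size_map.
    exact: leq_trans (leq_npairl _ _) (leq_npairr _ _).
  exact: leq_trans (size_enc_terms ts) (leq_trans (leq_npairr p _) (leq_npairr 0 _)).
- by rewrite !(@teval_reinterp I s).
- by rewrite (IH (agrees_below_le (leq_npairr _ _) agree)).
- rewrite IH1 ?IH2 //; apply: agrees_below_le agree.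
  + exact: leq_trans (leq_npairr _ _) (leq_npairr _ _).
  + exact: leq_trans (leq_npairl _ _) (leq_npairr _ _).
Qed.

Lemma fsat_reinterp (f : form nc ar) s : agrees_below (enc_form nc ar f) ->
  fsat nc ar (reinterp I) s f <-> fsat nc ar M s f.
Proof.
elim: f s => [a|z t|f IH|f1 IH1 f2 IH2|z a] s /= agree.
- by apply: bsat_reinterp; apply: agrees_below_le agree; apply: leq_npairr.
- by split=> all_s s' sit_s' sim_s'; have := all_s s' sit_s' sim_s'; rewrite !teval_reinterp.
- by rewrite (IH s (agrees_below_le (leq_npairr _ _) agree)).
- rewrite IH1 ?IH2 //; apply: agrees_below_le agree.
  + exact: leq_trans (leq_npairr _ _) (leq_npairr _ _).
  + exact: leq_trans (leq_npairl _ _) (leq_npairr _ _).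
- have agree_a : agrees_below (enc_bform nc ar a).
    by apply: agrees_below_le agree; apply: leq_trans (leq_npairr _ _) (leq_npairr _ _).
  by split=> all_s s' sit_s' sim_s'; apply/(bsat_reinterp _ agree_a); apply: all_s.
Qed.

End Reinterp.

Section Frame.
Variable s : var -> D.
Local Notation F := (frame_of s).

Lemma cnames_frame c : c < nc -> nth 0 (cnames F) c = name (const_val c).
Proof. by move=> lt_c; rewrite (nth_map c0) ?size_tuple // nth_mktuple_nat. Qed.

Lemma xnames_frame j : j < S -> nth 0 (xnames F) j = name (situation j vx).
Proof.
by move=> lt_j; rewrite (nth_map 0) ?size_iota // nth_iota // cnames_frame // ltn_divn_sq.
Qed.
Lemma ynames_frame j : j < S -> nth 0 (ynames F) j = name (situation j vy).
Proof.
by move=> lt_j; rewrite (nth_map 0) ?size_iota // nth_iota // cnames_frame // ltn_modn_sq.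
Qed.

Lemma rel_bit_frame u v : u < nc -> v < nc ->
  rel_bit F u v = minterp nc M r [:: const_val u; const_val v].
Proof.
move=> lt_u lt_v; rewrite /rel_bit /= nth_mktuple_nat ?ltn_pair // => lt_uv.
by rewrite /situation /= divn_pair ?modn_pair.
Qed.

Lemma sit_bit_frame j : j < S -> sit_bit F j = `[< msits nc M (situation j) >].
Proof. by move=> lt_j; rewrite /sit_bit /= nth_mktuple_nat. Qed.

Lemma sim_bits_frame z j j' : j < S -> j' < S ->
  nth false (sim_bits F (enc_var z)) (j * S + j') = `[< msim nc M z (situation j) (situation j') >].
Proof.
move=> lt_j lt_j'; case: z; rewrite /sim_bits /= nth_mktuple_nat ?ltn_pair // => lt_jj';
by rewrite divn_pair ?modn_pair.
Qed.

Lemma term_value_frame j t : j < S ->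
  term_value F j (enc_term nc t) = name (teval nc M (situation j) t).
Proof.
move=> lt_j; case: t => [c|[]] /=; rewrite /term_value npairK1 npairK2 //=.
- by rewrite cnames_frame // const_val_ord.
- exact: xnames_frame.
- exact: ynames_frame.
Qed.

Definition list_code (l : seq nat) := foldl (fun acc v => (npair acc v).+1) 0 l.
Definition pred_bits b p l := bitn b (npair p (list_code l)).

Lemma iter_key_step j (ts : seq (term nc)) acc fuel : j < S -> size ts <= fuel ->
  iter fuel (key_step F j) (npair (enc_terms nc ts) acc) =
  npair 0 (foldl (fun acc v => (npair acc v).+1) acc
                 [seq val (name (teval nc M (situation j) t)) | t <- ts]).
Proof.
move=> lt_j; elim: ts acc fuel => [|t ts IH] acc fuel le_size /=.
  by apply: iter_fix; rewrite /key_step npairK1.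
case: fuel le_size => // fuel le_size.
by rewrite iterSr {2}/key_step !npairK1 !npairK2 /= term_value_frame // IH.
Qed.

Lemma terms_key_frame j (ts : seq (term nc)) : j < S ->
  terms_key F j (enc_terms nc ts) =
  list_code [seq val (name (teval nc M (situation j) t)) | t <- ts].
Proof. by move=> lt_j; rewrite /terms_key iter_key_step ?npairK2 ?size_enc_terms. Qed.

Lemma atom_bit_frame b j p (ts : (ar p).-tuple (term nc)) : ar r = 2 -> j < S ->
  atom_bit r F b j (npair p (enc_terms nc ts)) =
  minterp nc (with_preds (pred_bits b)) p [seq teval nc M (situation j) t | t <- ts].
Proof.
move=> ar_r lt_j; rewrite /atom_bit npairK1 npairK2 /= /preds_interp; case: eqP => [eq_pr|_].
  subst p; case: ts => -[|t1 [|t2 [|? ?]]]; rewrite ar_r //= => _.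
  rewrite !npairK1 !npairK2 /= npairK1 !term_value_frame // rel_bit_frame ?ltn_ord //.
  by rewrite !const_val_name.
by rewrite size_map size_tuple eqxx terms_key_frame // /pred_bits -map_comp.
Qed.

Lemma knows_frame z j (Q : (var -> D) -> Prop) (QF : nat -> bool) : j < S ->
  (forall j', j' < S -> QF j' = `[< Q (situation j') >]) ->
  knows F (enc_var z) j QF =
  `[< forall s', msits nc M s' -> msim nc M z (situation j) s' -> Q s' >].
Proof.
move=> lt_j QFE; apply/forallP/asboolP => [all_j s' sit_s' sim_s'|all_s j'].
  move: (all_j (Ordinal (sit_index_lt s'))) => /=.
  rewrite sit_bit_frame ?sim_bits_frame ?sit_index_lt ?QFE ?sit_index_lt // situation_index.
  by rewrite (asboolT sit_s') (asboolT sim_s') => /asboolP.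
rewrite sit_bit_frame ?sim_bits_frame ?QFE //.
apply/implyP => /andP[/asboolP sit_j' /asboolP sim_j'].
by apply/asboolP; apply: all_s.
Qed.

Variable b : nat.
Hypothesis ar_r : ar r = 2.
Local Notation Mb := (with_preds (pred_bits b)).

Lemma bform_table_frame (a : bform nc ar) N j : enc_bform nc ar a < N -> j < S ->
  bitn (bit_table S (bform_step r F b) N) (S * enc_bform nc ar a + j) =
  `[< bsat nc ar Mb (situation j) a >].
Proof.
elim: a N j => [p ts|t1 t2|a IH|a1 IH1 a2 IH2] N j lt_aN lt_j;
  rewrite bitn_bit_table //= /bform_step npairK1 npairK2 /=.
- by rewrite atom_bit_frame // asboolb.
- rewrite npairK1 npairK2 !term_value_frame //.
  by rewrite !teval_reinterp; apply/eqP/asboolP => [/val_inj/name_inj|->].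
- by rewrite IH ?ltn_npairr // asbool_neg.
- rewrite npairK1 npairK2 IH1 ?IH2 ?asbool_and //.
  + exact: leq_ltn_trans (leq_npairr _ _) (ltn_npairr _ _).
  + exact: leq_ltn_trans (leq_npairl _ _) (ltn_npairr _ _).
Qed.

Lemma form_table_frame BHf NB (f : form nc ar) N j :
  (forall (a : bform nc ar) j, enc_bform nc ar a < NB -> j < S ->
     bitn BHf (S * enc_bform nc ar a + j) = `[< bsat nc ar Mb (situation j) a >]) ->
  enc_form nc ar f < NB -> enc_form nc ar f < N -> j < S ->
  bitn (bit_table S (form_step F BHf) N) (S * enc_form nc ar f + j) =
  `[< fsat nc ar Mb (situation j) f >].
Proof.
move=> BHfE; elim: f N j => [a|z t|f IH|f1 IH1 f2 IH2|z a] N j lt_fNB lt_fN lt_j;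
  rewrite bitn_bit_table //= /form_step npairK1 npairK2 /=.
- by rewrite BHfE // (leq_ltn_trans (leq_npairr 0 _)).
- rewrite npairK1 npairK2.
  rewrite (@knows_frame _ _ (fun s' => teval nc Mb s' t = teval nc Mb (situation j) t)) //.
  move=> j' lt_j'; rewrite !term_value_frame // !teval_reinterp.
  by apply/eqP/asboolP => [/val_inj/name_inj|->].
- have lt_f : enc_form nc ar f < enc_form nc ar (FNot _ _ f) by apply: ltn_npairr.
  by rewrite IH ?asbool_neg // (ltn_trans lt_f).
- have lt_f1 : enc_form nc ar f1 < enc_form nc ar (FAnd _ _ f1 f2).
    exact: leq_ltn_trans (leq_npairl _ _) (ltn_npairr _ _).
  have lt_f2 : enc_form nc ar f2 < enc_form nc ar (FAnd _ _ f1 f2).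
    exact: leq_ltn_trans (leq_npairr _ _) (ltn_npairr _ _).
  by rewrite npairK1 npairK2 IH1 ?IH2 ?asbool_and // (ltn_trans _ lt_fNB).
- rewrite npairK1 npairK2 (@knows_frame _ _ (fun s' => bsat nc ar Mb s' a)) // => j' lt_j'.
  rewrite BHfE // (leq_ltn_trans _ lt_fNB) //.
  exact: leq_trans (leq_npairr _ _) (leq_npairr _ _).
Qed.

Lemma holds_frame (f : form nc ar) :
  holds r F (enc_form nc ar f) b = `[< fsat nc ar Mb s f >].
Proof.
rewrite /holds /cur_sit (form_table_frame (NB := (enc_form nc ar f).+1)) ?sit_index_lt //.
  by rewrite situation_index.
by move=> a j lt_a lt_j; rewrite bform_table_frame.
Qed.

End Frame.

Lemma list_code_rcons l v : list_code (rcons l v) = (npair (list_code l) v).+1.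
Proof. by rewrite /list_code foldl_rcons. Qed.

Lemma list_code_inj : injective list_code.
Proof.
elim/last_ind => [|l v IH] l'; case/lastP: l' => [|l' v'] //; rewrite !list_code_rcons //.
by case=> /npair_inj[/IH -> ->].
Qed.

Lemma atom_key_lt p l n : p <= n -> size l <= n -> all (fun v => v < nc) l ->
  npair p (list_code l) < atoms_bound nc n.
Proof.
move=> le_p le_l small_l; rewrite ltnS leq_npair //.
have iter_mono : {homo (fun m => iter m (fun h => (npair h nc).+1) 0) : a b / a <= b}.
  apply: homo_leq => [//|a b c|m]; first exact: leq_trans.
  by rewrite iterS (leq_trans (leq_npairl _ nc)).
apply: leq_trans (iter_mono _ _ le_l); elim/last_ind: l small_l {le_l} => [//|l v IH].
rewrite all_rcons size_rcons list_code_rcons iterS => /andP[lt_v /IH le_l].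
by rewrite ltnS leq_npair // ltnW.
Qed.

Lemma pred_bits_exists n : is_model nc ar r M ->
  exists2 b, b < 2 ^ atoms_bound nc n & agrees_below (preds_interp (pred_bits b)) n.
Proof.
case=> size_ok _ _ _ _.
pose key g := `[< exists p l, g = npair p (list_code l) /\ minterp nc M p (map const_val l) >].
have [b lt_b bE] := bits_sum_exists key (atoms_bound nc n).
exists b => // p l le_p le_l; rewrite /preds_interp; case: eqP => [-> //|_].
have small_l : all (fun v => v < nc) [seq val (name d) | d <- l].
  by apply/allP => _ /mapP[d _ ->]; apply: ltn_ord.
have names_l : map const_val [seq val (name d) | d <- l] = l.
  by rewrite -map_comp (eq_map const_val_name) map_id.
rewrite /pred_bits bE ?atom_key_lt ?size_map // /key.
have -> : `[< exists p' l', npair p (list_code [seq val (name d) | d <- l]) =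
              npair p' (list_code l') /\ minterp nc M p' (map const_val l') >] =
          minterp nc M p l.
  apply/asboolP/idP => [[p' [l' [/npair_inj[<- /list_code_inj <-]]]]|Ipl]; first by rewrite names_l.
  by exists p, [seq val (name d) | d <- l]; rewrite names_l.
by case Ipl: (minterp nc M p l); rewrite ?andbF // (size_ok _ _ Ipl) eqxx.
Qed.

Lemma sat_in_frame_of s (f : form nc ar) : ar r = 2 -> is_model nc ar r M -> fsat nc ar M s f ->
  sat_in r (frame_of s) (enc_form nc ar f).
Proof.
move=> ar_r model_M sat_f; have [b lt_b agree] := pred_bits_exists (enc_form nc ar f) model_M.
apply/existsP; exists (Ordinal lt_b); rewrite holds_frame //.
by apply/asboolP/(fsat_reinterp _ agree).
Qed.

Lemma satisfiable_of_sat_in k s (f : form nc ar) : ar r = 2 ->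
  is_model nc ar r M -> k_sight nc r k M -> msits nc M s ->
  sat_in r (frame_of s) (enc_form nc ar f) -> satisfiable nc ar r k f.
Proof.
move=> ar_r model_M k_M sit_s /existsP[b]; rewrite holds_frame // => /asboolP sat_f.
have [model_Mb k_Mb] := with_preds_model (pred_bits b) model_M k_M.
by exists (with_preds (pred_bits b)), s.
Qed.

End Semantics.

(** * The decision procedure *)

Section Decider.
Variables (k nc : nat) (ar : nat -> nat) (r : nat) (c0 : 'I_nc).

Definition realized (F : frame nc) : Prop :=
  exists (M : model nc) (s : var -> mdom nc M),
    [/\ is_model nc ar r M, k_sight nc r k M, msits nc M s & frame_of r c0 s = F].

(* The realised frames form a finite set, which is chosen classically: only the existence
   of the program is claimed. *)
Definition decider : rec :=
  RComp sgn_rec [:: sum_progs [seq sat_in_rec r F | F <- enum (frame nc) & `[< realized F >]]].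

Lemma decider_safe : prim_safe false decider.
Proof. by rewrite /= sum_progs_safe // all_map; apply/allP => F _; apply: sat_in_rec_safe. Qed.

Lemma deciderE (f : form nc ar) : ar r = 2 ->
  peval decider [:: enc_form nc ar f] = `[< satisfiable nc ar r k f >].
Proof.
move=> ar_r; rewrite /decider peval_comp /= sum_progsE sgn_recE -map_comp sumnE lt0n.
rewrite sum_nat_seq_neq0; congr (nat_of_bool _); apply/hasP/asboolP.
  case=> x /mapP[F]; rewrite mem_filter => /andP[/asboolP realized_F _] -> /=.
  case: realized_F => M [s [model_M k_M sit_s <-]]; rewrite sat_in_recE eqb0 negbK.
  have [_ _ named _ _] := model_M.
  exact: satisfiable_of_sat_in.
case=> M [s [model_M k_M sit_s sat_f]]; have [_ _ named _ _] := model_M.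
exists (sat_in r (frame_of r c0 s) (enc_form nc ar f) : nat); last first.
  by rewrite eqb0 negbK; apply: sat_in_frame_of.
apply/mapP; exists (frame_of r c0 s) => /=; last by rewrite sat_in_recE.
by rewrite mem_filter mem_enum andbT; apply/asboolP; exists M, s.
Qed.

End Decider.

Theorem corollary1 (k nc : nat) (ar : nat -> nat) (r : nat) :
  0 < nc -> ar r = 2 ->
  exists alg : rec, forall phi : form nc ar,
    (satisfiable nc ar r k phi -> reval alg [:: enc_form nc ar phi] 1) /\
    (~ satisfiable nc ar r k phi -> reval alg [:: enc_form nc ar phi] 0).
Proof.
move=> nc_gt0 ar_r; pose c0 : 'I_nc := Ordinal nc_gt0.
exists (decider k ar r c0) => phi.
have := reval_peval (decider_safe k ar r c0) (xs := [:: enc_form nc ar phi]) (fun _ => isT).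
rewrite deciderE // => reval_decider.
by split=> sat_phi; move: reval_decider; rewrite ?(asboolT sat_phi) ?(asboolF sat_phi).
Qed.
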